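(* Let $n\ge 2$ and let $g(q)=q^{n}+q^{n-1}a_{n-1}+\dots+qa_1+a_0$ with $a_0,\dots,a_{n-1}\in\mathbb{H}$ and $a_1,\dots,a_{n-1}\neq 0$. Then every zero $q\in\mathbb{H}$ of $g$ satisfies $$|q|\le \max\Big\{\Big|\frac{a_0}{a_1}\Big|,\ 2\Big|\frac{a_1}{a_2}\Big|,\ 2\Big|\frac{a_2}{a_3}\Big|,\ \dots,\ 2\Big|\frac{a_{n-2}}{a_{n-1}}\Big|,\ 2|a_{n-1}|\Big\}.$$
   Context: $\mathbb{H}$ denotes the real quaternions with norm $|q|=\sqrt{q\bar q}$ (Euclidean norm on $\mathbb{R}^4$); $|a/b|$ means $|a|/|b|$. The polynomial $g$ is evaluated at $q\in\mathbb{H}$ by direct substitution, $g(q)=q^n+q^{n-1}a_{n-1}+\dots+qa_1+a_0$ (coefficients to the right of the powers); a zero of $g$ is a $q\in\mathbb{H}$ with $g(q)=0$. *)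

From HB Require Import structures.
From mathcomp Require Import all_boot all_order all_algebra.
From mathcomp Require Import reals.
Set Implicit Arguments. Unset Strict Implicit. Unset Printing Implicit Defensive.
Import Order.TTheory GRing.Theory Num.Theory.
Local Open Scope ring_scope.

(* Real quaternions  x0 + x1 i + x2 j + x3 k  over a real field R,
   with Hamilton's rules i^2 = j^2 = k^2 = ijk = -1. *)
Record quat (R : realType) := Quat { q0 : R; q1 : R; q2 : R; q3 : R }.

Definition qzero (R : realType) : quat R := Quat 0 0 0 0.
Definition qone (R : realType) : quat R := Quat 1 0 0 0.

Definition qadd (R : realType) (p q : quat R) : quat R :=
  Quat (q0 p + q0 q) (q1 p + q1 q) (q2 p + q2 q) (q3 p + q3 q).

Definition qmul (R : realType) (p q : quat R) : quat R :=
  Quat (q0 p * q0 q - q1 p * q1 q - q2 p * q2 q - q3 p * q3 q)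
       (q0 p * q1 q + q1 p * q0 q + q2 p * q3 q - q3 p * q2 q)
       (q0 p * q2 q - q1 p * q3 q + q2 p * q0 q + q3 p * q1 q)
       (q0 p * q3 q + q1 p * q2 q - q2 p * q1 q + q3 p * q0 q).

Fixpoint qpow (R : realType) (q : quat R) (k : nat) : quat R :=
  match k with
  | 0%N => qone R
  | k'.+1 => qmul (qpow q k') q
  end.

Definition qnorm (R : realType) (q : quat R) : R :=
  Num.sqrt (q0 q ^+ 2 + q1 q ^+ 2 + q2 q ^+ 2 + q3 q ^+ 2).

Definition qpoly_eval (R : realType) (n : nat) (a : nat -> quat R) (q : quat R)
  : quat R :=
  qadd (qpow q n) (\big[@qadd R/qzero R]_(0 <= k < n) qmul (qpow q k) (a k)).

(** If |q| = r exceeded the bound, the weights b_k = r^k |a_k| would satisfy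
    b_0 < b_1 and b_(k+1) >= 2 b_k for 1 <= k < n-1, and r^n >= 2 b_(n-1);
    a doubling sequence is dominated by twice its last term, so
    b_0 + ... + b_(n-1) < r^n.  But g(q) = 0 gives q^n = -(sum of q^k a_k),
    and multiplicativity of the quaternion norm together with the triangle
    inequality yields r^n <= b_0 + ... + b_(n-1). *)

From HB Require Import structures.
From mathcomp Require Import all_boot all_order all_algebra.
From mathcomp Require Import reals.
From mathcomp Require Import ring lra.
Import Order.TTheory GRing.Theory Num.Theory.
Local Open Scope ring_scope.

Section DoublingSums.
Variable R : realFieldType.

Lemma sum_doubling_le (b : nat -> R) (j m : nat) : (j <= m)%N ->
  (forall k, (j <= k < m)%N -> 2 * b k <= b k.+1) ->
  \sum_(j <= k < m) b k + b j <= b m.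
Proof.
elim: m => [|m IHm] jm hb; first by rewrite leqn0 in jm; rewrite (eqP jm) big_geq ?add0r.
case: (ltngtP j m.+1) jm => // [jm _|->]; last by rewrite big_geq ?add0r.
rewrite big_nat_recr //= -addrA [b m + _]addrC addrA.
have IH : \sum_(j <= k < m) b k + b j <= b m.
  by apply: IHm => // k /andP[jk km]; rewrite hb // jk ltnS ltnW.
have bm : 2 * b m <= b m.+1 by rewrite hb // -ltnS jm leqnn.
lra.
Qed.

Lemma weighted_sum_lt_pow (r : R) (A : nat -> R) (n : nat) :
  (2 <= n)%N -> 0 <= r ->
  A 0%N < r * A 1%N ->
  (forall k, (1 <= k < n.-1)%N -> 2 * A k <= r * A k.+1) ->
  2 * A n.-1 <= r ->
  \sum_(0 <= k < n) r ^+ k * A k < r ^+ n.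
Proof.
case: n => [|[|m]] // _ r0 hA01 hA hAlast /=.
set b := fun k => r ^+ k * A k.
have doubling : \sum_(1 <= k < m.+1) b k + b 1%N <= b m.+1.
  apply: sum_doubling_le => // k /hA hk.
  have -> : b k.+1 = r ^+ k * (r * A k.+1) by rewrite /b exprSr mulrA.
  by rewrite /b mulrCA ler_wpM2l ?exprn_ge0.
have b01 : b 0%N < b 1%N by rewrite /b expr0 mul1r expr1.
have blast : 2 * b m.+1 <= r ^+ m.+2.
  by rewrite /b mulrCA [r ^+ m.+2]exprSr ler_wpM2l ?exprn_ge0.
rewrite big_ltn // big_nat_recr //=.
move: doubling b01 blast; rewrite /b; lra.
Qed.

End DoublingSums.

Section QuaternionNorm.
Context {R : realType}.
Implicit Types p q : quat R.

Definition qnorm2 p : R := q0 p ^+ 2 + q1 p ^+ 2 + q2 p ^+ 2 + q3 p ^+ 2.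

Definition qdot p q : R := q0 p * q0 q + q1 p * q1 q + q2 p * q2 q + q3 p * q3 q.

Lemma qnormE p : qnorm p = Num.sqrt (qnorm2 p).
Proof. by []. Qed.

Lemma qnorm2_ge0 p : 0 <= qnorm2 p.
Proof. by rewrite /qnorm2 !addr_ge0 ?sqr_ge0. Qed.

Lemma qnorm_ge0 p : 0 <= qnorm p.
Proof. exact: sqrtr_ge0. Qed.

Lemma qnorm0 : qnorm (qzero R) = 0.
Proof. by rewrite qnormE /qnorm2 /= expr0n /= !addr0 sqrtr0. Qed.

Lemma qnorm1 : qnorm (qone R) = 1.
Proof. by rewrite qnormE /qnorm2 /= expr1n !expr0n /= !addr0 sqrtr1. Qed.

Lemma sqr_qnorm p : qnorm p ^+ 2 = qnorm2 p.
Proof. by rewrite sqr_sqrtr ?qnorm2_ge0. Qed.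

Lemma qnorm_gt0 p : p <> qzero R -> 0 < qnorm p.
Proof.
case: p => x0 x1 x2 x3 p_neq0; rewrite sqrtr_gt0 lt_def qnorm2_ge0 andbT.
apply: contra_notN p_neq0; rewrite /qnorm2 /=.
rewrite !paddr_eq0 ?addr_ge0 ?sqr_ge0 // !sqrf_eq0.
by move=> /andP[/andP[/andP[/eqP-> /eqP->] /eqP->] /eqP->].
Qed.

(* Euler's four-square identity. *)
Lemma qnorm_mul p q : qnorm (qmul p q) = qnorm p * qnorm q.
Proof.
rewrite !qnormE -sqrtrM ?qnorm2_ge0 //; congr Num.sqrt.
by case: p => ? ? ? ?; case: q => ? ? ? ?; rewrite /qnorm2 /=; ring.
Qed.

Lemma qnorm_pow q k : qnorm (qpow q k) = qnorm q ^+ k.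
Proof.
by elim: k => [|k IHk] /=; rewrite ?qnorm1 // qnorm_mul IHk exprSr.
Qed.

(* Cauchy-Schwarz, via Lagrange's identity. *)
Lemma qdot_le_qnorm p q : qdot p q <= qnorm p * qnorm q.
Proof.
have sqr_le : qdot p q ^+ 2 <= qnorm2 p * qnorm2 q.
  rewrite -subr_ge0; case: p => a b c d; case: q => e f g h.
  have -> : qnorm2 (Quat a b c d) * qnorm2 (Quat e f g h)
            - qdot (Quat a b c d) (Quat e f g h) ^+ 2 =
    (a*f - b*e) ^+ 2 + (a*g - c*e) ^+ 2 + (a*h - d*e) ^+ 2 +
    (b*g - c*f) ^+ 2 + (b*h - d*f) ^+ 2 + (c*h - d*g) ^+ 2.
    by rewrite /qnorm2 /qdot /=; ring.
  by rewrite !addr_ge0 ?sqr_ge0.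
apply: le_trans (ler_norm _) _.
by rewrite -sqrtr_sqr !qnormE -sqrtrM ?qnorm2_ge0 // ler_sqrt // mulr_ge0 ?qnorm2_ge0.
Qed.

Lemma qnorm2_add p q : qnorm2 (qadd p q) = qnorm2 p + qnorm2 q + 2 * qdot p q.
Proof.
by case: p => ? ? ? ?; case: q => ? ? ? ?; rewrite /qnorm2 /qdot /=; ring.
Qed.

Lemma qnorm_add p q : qnorm (qadd p q) <= qnorm p + qnorm q.
Proof.
have sum_ge0 : 0 <= qnorm p + qnorm q by rewrite addr_ge0 ?qnorm_ge0.
rewrite -(ger0_norm sum_ge0) -sqrtr_sqr qnormE ler_sqrt ?sqr_ge0 //.
rewrite qnorm2_add; have := qdot_le_qnorm p q; rewrite -sqr_qnorm -(sqr_qnorm q); nra.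
Qed.

Lemma qnorm_sum (I : Type) (s : seq I) (F : I -> quat R) :
  qnorm (\big[@qadd R/qzero R]_(i <- s) F i) <= \sum_(i <- s) qnorm (F i).
Proof.
elim: s => [|x s IHs]; first by rewrite !big_nil qnorm0.
by rewrite !big_cons (le_trans (qnorm_add _ _)) // lerD.
Qed.

Lemma qnorm_eq_of_qadd_eq0 p q : qadd p q = qzero R -> qnorm p = qnorm q.
Proof.
case: p => ? ? ? ?; case: q => ? ? ? ? [] /eqP; rewrite addr_eq0 => /eqP->.
move=> /eqP; rewrite addr_eq0 => /eqP-> /eqP; rewrite addr_eq0 => /eqP->.
by move=> /eqP; rewrite addr_eq0 => /eqP->; rewrite !qnormE /qnorm2 /= !sqrrN.
Qed.

Lemma qnorm_root [n : nat] [a : nat -> quat R] [q : quat R] :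
  qpoly_eval n a q = qzero R ->
  qnorm q ^+ n <= \sum_(0 <= k < n) qnorm q ^+ k * qnorm (a k).
Proof.
move=> /qnorm_eq_of_qadd_eq0; rewrite qnorm_pow => ->.
apply: le_trans (qnorm_sum _ _ _) _.
by apply: ler_sum => k _; rewrite qnorm_mul qnorm_pow.
Qed.

End QuaternionNorm.

Theorem corollary1 (R : realType) (n : nat) (a : nat -> quat R) (q : quat R) :
  (2 <= n)%N ->
  (forall k : nat, (1 <= k <= n.-1)%N -> a k <> qzero R) ->
  qpoly_eval n a q = qzero R ->
  qnorm q <=
    Num.max
      (Num.max (qnorm (a 0%N) / qnorm (a 1%N))
               (\big[Num.max/0]_(1 <= k < n.-1) (2 * (qnorm (a k) / qnorm (a k.+1)))))
      (2 * qnorm (a n.-1)).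
Proof.
move=> n_ge2 a_neq0 root_q; rewrite leNgt; apply/negP.
rewrite !gt_max => /andP[/andP[lt0 ltmid] ltlast].
have a_gt0 k : (1 <= k <= n.-1)%N -> 0 < qnorm (a k).
  by move=> hk; apply/qnorm_gt0/a_neq0.
have := qnorm_root root_q; apply/negP; rewrite -ltNge.
apply: weighted_sum_lt_pow; rewrite ?qnorm_ge0 ?ltW //.
- by rewrite -ltr_pdivrMr ?a_gt0 // -subn1 ltn_subRL.
- move=> k /andP[k_ge1 k_lt]; apply: ltW.
  rewrite -ltr_pdivrMr ?a_gt0 ?k_ge1 ?(ltnW k_lt) // -mulrA.
  apply: le_lt_trans ltmid.
  apply: (le_bigmax_seq _ k xpredT (fun i => 2 * (qnorm (a i) / qnorm (a i.+1)))) => //.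
  by rewrite mem_index_iota k_ge1.
Qed.
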